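(* Let $X$ be a real Hilbert space, let $\rho>-1$ and let $A\colon X\rightrightarrows X$ be maximally $\rho$-comonotone. Then $\operatorname{ran}(\mathrm{Id}+A^{-1})=X$.
   Context: For $A\colon X\rightrightarrows X$, $A^{-1}$ is defined by $\operatorname{gra}A^{-1}=\{(u,x):(x,u)\in\operatorname{gra}A\}$. For $\rho\in\mathbb R$, $A$ is $\rho$-comonotone if $\langle x-y,u-v\rangle\ge\rho\|u-v\|^2$ for all $(x,u),(y,v)\in\operatorname{gra}A$; maximally $\rho$-comonotone if moreover no $\rho$-comonotone operator has a graph properly containing $\operatorname{gra}A$. *)

From HB Require Import structures.
From mathcomp Require Import all_boot all_order all_algebra.
From mathcomp Require Import all_classical all_reals all_analysis.
Set Implicit Arguments. Unset Strict Implicit. Unset Printing Implicit Defensive.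
Import Order.TTheory GRing.Theory Num.Theory.
Import numFieldNormedType.Exports.
Local Open Scope classical_set_scope.
Local Open Scope ring_scope.

(* A real Hilbert space is modelled as a complete normed space X over a
   realType R together with an inner product ip inducing the norm. *)
Definition is_inner_product (R : realType) (X : normedModType R)
  (ip : X -> X -> R) : Prop :=
  [/\ (forall x y, ip x y = ip y x),
      (forall (a : R) (x y z : X), ip (a *: x + y) z = a * ip x z + ip y z)
    & (forall x, ip x x = `|x| ^+ 2)].

Definition setop (X : Type) := X -> set X.

Definition gra (X : Type) (A : setop X) : set (X * X) :=
  [set p | A p.1 p.2].

Definition opinv (X : Type) (A : setop X) : setop X :=
  fun u => [set x | A x u].

Definition opId (X : Type) : setop X := fun x => [set x].

Definition opadd (R : realType) (X : normedModType R) (A B : setop X) : setop X :=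
  fun x => [set a + b | a in A x & b in B x].

Definition ran (X : Type) (A : setop X) : set X :=
  [set u | exists x, A x u].

Definition comonotone (R : realType) (X : normedModType R)
  (ip : X -> X -> R) (rho : R) (A : setop X) : Prop :=
  forall x u y v, A x u -> A y v -> rho * `|u - v| ^+ 2 <= ip (x - y) (u - v).

Definition max_comonotone (R : realType) (X : normedModType R)
  (ip : X -> X -> R) (rho : R) (A : setop X) : Prop :=
  comonotone ip rho A /\
  ~ (exists B : setop X, comonotone ip rho B /\ gra A `<` gra B).

(* Let G be monotone.  Finite nonnegative combinations (L, A, B, K) of the
   points (1, a, b, <a, b>), b \in G a, satisfy <A, B> <= L K by monotonicity,
   so on those of weight L = 1 the concave potential -K - |(A - B)/2|^2 is
   bounded above by 0.  Along a maximizing sequence the points (A - B)/2 are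
   Cauchy by the parallelogram law, and their limit p satisfies
   <p - a, p + b> <= 0 for all b \in G a (i.e. (p, -p) is monotonically
   related to G): otherwise a small step towards (a, b, <a, b>) would raise
   the potential above its supremum.  For a rho-comonotone A and a target z,
   the graph {((1 + rho) v, y - rho v - z) | v \in A y} is monotone when
   rho > -1; its point p gives u = p / (1 + rho) and x = z - u with (x, u)
   rho-comonotonically related to A, so (x, u) lies in the graph of A by
   maximality and z = u + x. *)

From HB Require Import structures.
From mathcomp Require Import all_boot all_order all_algebra.
From mathcomp Require Import all_classical all_reals all_analysis.
From mathcomp Require Import ring lra.
Import Order.TTheory GRing.Theory Num.Theory.
Import numFieldNormedType.Exports.
Local Open Scope classical_set_scope.
Local Open Scope ring_scope.
Set Implicit Arguments.
Unset Strict Implicit.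

Lemma le0_of_le_scaled (R : realFieldType) (x M : R) :
  (forall t, 0 < t <= 1 -> x <= t * M) -> x <= 0.
Proof.
move=> le_xM; rewrite leNgt; apply/negP => x_gt0.
have x_le_M : x <= M by rewrite -[M]mul1r le_xM // ltr01 lexx.
have M_gt0 : 0 < M := lt_le_trans x_gt0 x_le_M.
have t_gt0 : 0 < x / (2 * M) by rewrite divr_gt0 ?mulr_gt0.
have t_le1 : x / (2 * M) <= 1 by rewrite ler_pdivrMr ?mulr_gt0 //; lra.
have /le_xM : 0 < x / (2 * M) <= 1 by apply/andP.
have -> : x / (2 * M) * M = x / 2 by field; rewrite gt_eqF.
lra.
Qed.

Lemma cauchy_sqr_dist (R : realFieldType) (V : normedModType R) (u : nat -> V)
    (e : nat -> R) :
  e @ \oo --> 0 -> (forall n m, `|u n - u m| ^+ 2 <= e n + e m) ->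
  cauchy (u @ \oo).
Proof.
move=> e0 le_ue; apply: cauchy_exP => eps eps_gt0.
have eps2_gt0 : 0 < eps ^+ 2 / 2 by rewrite divr_gt0 ?exprn_gt0.
have [N _ small_e] := cvgr0_norm_lt _ e0 _ eps2_gt0.
exists (u N), N => // m /= le_Nm; rewrite -ball_normE /ball_ /=.
rewrite -(@ltr_pXn2r _ 2) ?nnegrE ?(ltW eps_gt0) //.
have := le_ue N m; have := small_e N (leqnn N); have := small_e m le_Nm.
have := ler_norm (e N); have := ler_norm (e m); lra.
Qed.

Section InnerProduct.
Variables (R : realType) (X : normedModType R) (ip : X -> X -> R).
Hypothesis hip : is_inner_product ip.

Lemma ipC x y : ip x y = ip y x. Proof. by case: hip. Qed.
Lemma ipxx x : ip x x = `|x| ^+ 2. Proof. by case: hip. Qed.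

Lemma ipDl x y z : ip (x + y) z = ip x z + ip y z.
Proof. by case: hip => _ lin _; rewrite -{1}[x]scale1r lin mul1r. Qed.

Lemma ip0l z : ip 0 z = 0.
Proof. by have := ipDl 0 0 z; rewrite addr0; lra. Qed.

Lemma ipZl a x z : ip (a *: x) z = a * ip x z.
Proof. by case: hip => _ lin _; rewrite -[a *: x]addr0 lin ip0l addr0. Qed.

Lemma ipNl x z : ip (- x) z = - ip x z.
Proof. by rewrite -scaleN1r ipZl mulN1r. Qed.

Lemma ipBl x y z : ip (x - y) z = ip x z - ip y z.
Proof. by rewrite ipDl ipNl. Qed.

Lemma ip0r z : ip z 0 = 0. Proof. by rewrite ipC ip0l. Qed.

Lemma ipDr x y z : ip z (x + y) = ip z x + ip z y.
Proof. by rewrite ipC ipDl !(ipC z). Qed.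

Lemma ipZr a x z : ip z (a *: x) = a * ip z x.
Proof. by rewrite ipC ipZl ipC. Qed.

Lemma ipNr x z : ip z (- x) = - ip z x.
Proof. by rewrite ipC ipNl ipC. Qed.

Lemma ipBr x y z : ip z (x - y) = ip z x - ip z y.
Proof. by rewrite ipDr ipNr. Qed.

Lemma ip_ge0 x : 0 <= ip x x.
Proof. by rewrite ipxx sqr_ge0. Qed.

Lemma ip_polarization x y : ip x y = (`|x + y| ^+ 2 - `|x - y| ^+ 2) / 4.
Proof.
by rewrite -!ipxx !(ipDl, ipDr, ipNl, ipNr) (ipC y x); lra.
Qed.

Lemma cvg_ip {T : Type} {F : set_system T} {FF : Filter F} (f g : T -> X) x y :
  f @ F --> x -> g @ F --> y -> (fun t => ip (f t) (g t)) @ F --> ip x y.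
Proof.
move=> fx gy; rewrite ip_polarization.
under eq_fun do rewrite ip_polarization.
apply: cvgM; last exact: cvg_cst.
have sqr_norm_cvg (h : T -> X) l :
    h @ F --> l -> (fun t => `|h t| ^+ 2) @ F --> `|l| ^+ 2.
  move=> hl; rewrite expr2; under eq_fun do rewrite expr2.
  by apply: cvgM; apply: cvg_norm.
by apply: cvgB; apply: sqr_norm_cvg; [apply: cvgD | apply: cvgB].
Qed.

End InnerProduct.

Ltac ip_expand h :=
  rewrite ?(ipDl h, ipDr h, ipBl h, ipBr h, ipZl h, ipZr h, ipNl h, ipNr h,
            ip0l h, ip0r h).

Section Potential.
Variables (R : realType) (X : normedModType R) (ip : X -> X -> R).
Hypothesis hip : is_inner_product ip.

Definition half_diff (A B : X) : X := 2^-1 *: (A - B).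

Definition potential (A B : X) (K : R) : R :=
  - K - ip (half_diff A B) (half_diff A B).

Lemma half_diff_conv t A1 B1 A2 B2 :
  half_diff ((1 - t) *: A1 + t *: A2) ((1 - t) *: B1 + t *: B2) =
  (1 - t) *: half_diff A1 B1 + t *: half_diff A2 B2.
Proof.
rewrite /half_diff !scalerBr !scalerDr !scalerA (mulrC 2^-1) (mulrC _ t).
by rewrite addrACA opprD.
Qed.

Lemma potential_conv t A1 B1 K1 A2 B2 K2 :
  potential ((1 - t) *: A1 + t *: A2) ((1 - t) *: B1 + t *: B2)
    ((1 - t) * K1 + t * K2) =
  (1 - t) * potential A1 B1 K1 + t * potential A2 B2 K2 +
  t * (1 - t) *
    ip (half_diff A1 B1 - half_diff A2 B2) (half_diff A1 B1 - half_diff A2 B2).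
Proof.
rewrite /potential half_diff_conv.
move: (half_diff A1 B1) (half_diff A2 B2) => P1 P2.
by ip_expand hip; rewrite (ipC hip P2 P1); ring.
Qed.

Lemma potential_point P a b :
  potential a b (ip a b) + ip (P - half_diff a b) (P - half_diff a b) =
  ip (P - a) (P + b).
Proof.
rewrite /potential /half_diff; ip_expand hip.
by rewrite (ipC hip b a) (ipC hip a P) (ipC hip b P); field.
Qed.

End Potential.

Section ConicCombination.
Variables (R : realType) (X : normedModType R) (ip : X -> X -> R).
Hypothesis hip : is_inner_product ip.
Variable G : setop X.
Hypothesis monoG : comonotone ip 0 G.

Inductive conic_comb : R -> X -> X -> R -> Prop :=
| conic_comb0 : conic_comb 0 0 0 0
| conic_combS L A B K mu a b : conic_comb L A B K -> 0 <= mu -> G a b ->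
    conic_comb (L + mu) (A + mu *: a) (B + mu *: b) (K + mu * ip a b).

Lemma conic_comb_cross L A B K a b : conic_comb L A B K -> G a b ->
  ip A b + ip a B <= K + L * ip a b.
Proof.
move=> c Gab; elim: c => [|L' A' B' K' mu a' b' _ IH mu0 Gab'].
  by ip_expand hip; rewrite mul0r !addr0.
have := monoG Gab' Gab; rewrite mul0r => mono.
have := mulr_ge0 mu0 mono; move: IH; ip_expand hip.
lra.
Qed.

Lemma conic_comb_le L A B K : conic_comb L A B K -> ip A B <= L * K.
Proof.
elim=> [|L' A' B' K' mu a b c IH mu0 Gab].
  by ip_expand hip; rewrite mul0r.
have := ler_wpM2l mu0 (conic_comb_cross c Gab).
by move: IH; ip_expand hip; lra.
Qed.

Lemma conic_combZ L A B K c : conic_comb L A B K -> 0 <= c ->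
  conic_comb (c * L) (c *: A) (c *: B) (c * K).
Proof.
move=> cc c0; elim: cc => [|L' A' B' K' mu a b _ IH mu0 Gab].
  by rewrite mulr0 !scaler0; exact: conic_comb0.
rewrite !mulrDr !scalerDr !scalerA mulrA.
by apply: conic_combS => //; rewrite mulr_ge0.
Qed.

Lemma conic_combD L1 A1 B1 K1 L2 A2 B2 K2 :
  conic_comb L1 A1 B1 K1 -> conic_comb L2 A2 B2 K2 ->
  conic_comb (L1 + L2) (A1 + A2) (B1 + B2) (K1 + K2).
Proof.
move=> c1; elim=> [|L A B K mu a b _ IH mu0 Gab]; first by rewrite !addr0.
by rewrite !addrA; apply: conic_combS.
Qed.

Lemma conic_comb_point a b : G a b -> conic_comb 1 a b (ip a b).
Proof.
move=> Gab; have := conic_combS conic_comb0 ler01 Gab.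
by rewrite !add0r !scale1r mul1r.
Qed.

Lemma conic_comb_conv t A1 B1 K1 A2 B2 K2 :
  conic_comb 1 A1 B1 K1 -> conic_comb 1 A2 B2 K2 -> 0 <= t <= 1 ->
  conic_comb 1 ((1 - t) *: A1 + t *: A2) ((1 - t) *: B1 + t *: B2)
    ((1 - t) * K1 + t * K2).
Proof.
move=> c1 c2 /andP[t0]; rewrite -subr_ge0 => t1.
have := conic_combD (conic_combZ c1 t1) (conic_combZ c2 t0).
by rewrite !mulr1 subrK.
Qed.

Lemma potential_le0 A B K : conic_comb 1 A B K -> potential ip A B K <= 0.
Proof.
move=> /conic_comb_le; rewrite mul1r /potential /half_diff => AB_K.
have := ip_ge0 hip (A + B); move: AB_K; ip_expand hip.
by rewrite (ipC hip B A); lra.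
Qed.

Lemma potential_maximizing_seq a0 b0 : G a0 b0 ->
  exists S (A B : nat -> X) (K : nat -> R),
  [/\ forall A' B' K', conic_comb 1 A' B' K' -> potential ip A' B' K' <= S,
      forall n, conic_comb 1 (A n) (B n) (K n)
    & (fun n => S - potential ip (A n) (B n) (K n)) @ \oo --> 0].
Proof.
move=> G0.
pose E := [set r | exists A B K, conic_comb 1 A B K /\ r = potential ip A B K].
have supE : has_sup E.
  split; first by exists (potential ip a0 b0 (ip a0 b0)), a0, b0, (ip a0 b0);
    split=> //; exact: conic_comb_point.
  by exists 0 => r [A [B [K [c ->]]]]; exact: potential_le0.
have approx n : exists c : X * X * R, conic_comb 1 c.1.1 c.1.2 c.2 /\
    sup E - harmonic n < potential ip c.1.1 c.1.2 c.2.
  have [r [A [B [K [c ->]]]] lt_r] := sup_adherent (harmonic_gt0 n) supE.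
  by exists (A, B, K).
have [c cP] := choice approx.
have cc n := (cP n).1; have ltc n := (cP n).2.
exists (sup E), (fun n => (c n).1.1), (fun n => (c n).1.2), (fun n => (c n).2).
split=> [A B K cABK|//|]; first by apply: sup_upper_bound => //; exists A, B, K.
have gap_bound : \forall n \near \oo,
    0 <= sup E - potential ip (c n).1.1 (c n).1.2 (c n).2 <= harmonic n.
  apply: nearW => n; apply/andP; split; last by have := ltc n; lra.
  rewrite subr_ge0; apply: sup_upper_bound => //.
  by exists (c n).1.1, (c n).1.2, (c n).2.
exact: (squeeze_cvgr gap_bound (cvg_cst 0) cvg_harmonic).
Qed.

End ConicCombination.

Section MaximizingSequence.
Variables (R : realType) (X : completeNormedModType R) (ip : X -> X -> R).
Hypothesis hip : is_inner_product ip.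
Variable G : setop X.
Hypothesis monoG : comonotone ip 0 G.
Variables (S : R) (A B : nat -> X) (K : nat -> R).
Hypothesis le_S :
  forall A' B' K', conic_comb ip G 1 A' B' K' -> potential ip A' B' K' <= S.
Hypothesis combAB : forall n, conic_comb ip G 1 (A n) (B n) (K n).
Let gap n := S - potential ip (A n) (B n) (K n).
Hypothesis gap0 : gap @ \oo --> 0.
Let P n := half_diff (A n) (B n).

Lemma half_diff_sqr_dist n m : `|P n - P m| ^+ 2 <= 2 * gap n + 2 * gap m.
Proof.
have half01 : 0 <= (2^-1 : R) <= 1 by apply/andP; split; lra.
have := le_S (conic_comb_conv (combAB n) (combAB m) half01).
rewrite potential_conv // -(ipxx hip) /gap -/(P n) -/(P m).
have -> : (1 - 2^-1 : R) = 2^-1 by field.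
lra.
Qed.

Lemma half_diff_dir_le n a b t : G a b -> 0 < t <= 1 ->
  ip (P n - a) (P n + b) - t * ip (P n - half_diff a b) (P n - half_diff a b)
    <= gap n / t.
Proof.
move=> Gab /andP[t_gt0 t_le1].
have t01 : 0 <= t <= 1 by rewrite ltW.
have := le_S (conic_comb_conv (combAB n) (conic_comb_point ip Gab) t01).
rewrite potential_conv // -(potential_point hip (P n) a b) /gap -/(P n).
have := potential_le0 hip monoG (combAB n).
by rewrite ler_pdivlMr //; nra.
Qed.

Lemma maximizing_seq_minty_point :
  exists p, forall a b, G a b -> ip (p - a) (p + b) <= 0.
Proof.
have [p Pp] : exists p : X, P @ \oo --> p.
  exists (lim (P @ \oo)).
  apply/cauchy_cvgP/(cauchy_sqr_dist (e := fun n => 2 * gap n)).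
    by rewrite -(mulr0 2); apply: cvgM => //; exact: cvg_cst.
  exact: half_diff_sqr_dist.
have ip_cvg c d :
    (fun n => ip (P n + c) (P n + d)) @ \oo --> ip (p + c) (p + d).
  by apply: (cvg_ip hip); apply: cvgD => //; exact: cvg_cst.
exists p => a b Gab.
pose M := ip (p - half_diff a b) (p - half_diff a b).
apply: (le0_of_le_scaled (M := M)) => t t01.
rewrite -subr_le0; apply: (ler_cvg_to (a := \oo) _ _
  (nearW _ (fun n => half_diff_dir_le n Gab t01))).
  apply: cvgB; first exact: ip_cvg.
  by apply: cvgM; [exact: cvg_cst | exact: ip_cvg].
by rewrite -(mul0r t^-1); apply: cvgM => //; exact: cvg_cst.
Qed.

End MaximizingSequence.

Lemma monotone_exists_minty_point (R : realType) (X : completeNormedModType R)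
    (ip : X -> X -> R) (G : setop X) :
  is_inner_product ip -> comonotone ip 0 G ->
  exists p, forall a b, G a b -> ip (p - a) (p + b) <= 0.
Proof.
move=> hip monoG.
have [[a0 [b0 G0]] | noG] := pselect (exists a b, G a b); last first.
  by exists 0 => a b Gab; exfalso; apply: noG; exists a, b.
have [S [A [B [K [le_S combAB gap0]]]]] :=
  potential_maximizing_seq hip monoG G0.
exact: (maximizing_seq_minty_point hip monoG le_S combAB gap0).
Qed.

Definition minty_transform (R : realType) (X : normedModType R) (rho : R)
    (z : X) (A : setop X) : setop X :=
  fun a => [set b | exists y v,
    [/\ A y v, a = (1 + rho) *: v & b = y - rho *: v - z]].

Lemma minty_transform_monotone (R : realType) (X : normedModType R)
    (ip : X -> X -> R) (rho : R) (z : X) (A : setop X) :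
  is_inner_product ip -> 0 <= 1 + rho -> comonotone ip rho A ->
  comonotone ip 0 (minty_transform rho z A).
Proof.
move=> hip s_ge0 comonoA _ _ _ _ [y1 [v1 [A1 -> ->]]] [y2 [v2 [A2 -> ->]]].
have := comonoA _ _ _ _ A1 A2; rewrite -(ipxx hip) -subr_ge0.
move=> /(mulr_ge0 s_ge0).
rewrite mul0r; ip_expand hip.
rewrite (ipC hip v1 y1) (ipC hip v1 y2) (ipC hip v2 y1) (ipC hip v2 y2).
by rewrite (ipC hip v2 v1); lra.
Qed.

Lemma max_comonotone_related (R : realType) (X : normedModType R)
    (ip : X -> X -> R) (rho : R) (A : setop X) x u :
  is_inner_product ip -> max_comonotone ip rho A ->
  (forall y v, A y v -> rho * `|u - v| ^+ 2 <= ip (x - y) (u - v)) -> A x u.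
Proof.
move=> hip [comonoA maxA] related; apply: contrapT => notAxu; apply: maxA.
exists (fun y => [set v | A y v \/ (y = x /\ v = u)]); split.
  move=> x1 u1 x2 u2 [A1|[-> ->]] [A2|[-> ->]].
  - exact: comonoA.
  - rewrite distrC -(opprB x) -(opprB u) (ipNl hip) (ipNr hip) opprK.
    exact: related.
  - exact: related.
  - by rewrite !subrr (ip0l hip) normr0 expr0n mulr0.
split=> [[y v] /= Ayv|sub]; first by left.
by apply: notAxu; apply: (sub (x, u)); right.
Qed.

Theorem proposition2p9 (R : realType) (X : completeNormedModType R)
  (ip : X -> X -> R) (rho : R) (A : setop X) :
  is_inner_product ip -> -1 < rho -> max_comonotone ip rho A ->
  ran (opadd (@opId X) (opinv A)) = setT.
Proof.
move=> hip rho_gt maxA; apply/seteqP; split=> // z _.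
have s_gt0 : 0 < 1 + rho by lra.
have [comonoA _] := maxA.
have [p minty_p] := monotone_exists_minty_point hip
  (minty_transform_monotone (z := z) hip (ltW s_gt0) comonoA).
pose u := (1 + rho)^-1 *: p.
have p_u : p = (1 + rho) *: u by rewrite /u scalerA mulfV ?gt_eqF // scale1r.
clearbody u; subst p; pose x := z - u.
have Axu : A x u.
  apply: (max_comonotone_related hip maxA) => y v Ayv.
  have /minty_p : minty_transform rho z A ((1 + rho) *: v) (y - rho *: v - z).
    by exists y, v.
  have -> : ip ((1 + rho) *: u - (1 + rho) *: v)
               ((1 + rho) *: u + (y - rho *: v - z)) =
      (1 + rho) * (rho * ip (u - v) (u - v) - ip (x - y) (u - v)).
    rewrite /x; ip_expand hip.
    rewrite (ipC hip u y) (ipC hip u z) (ipC hip v y) (ipC hip v z).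
    by rewrite (ipC hip v u); ring.
  by rewrite pmulr_rle0 // subr_le0 (ipxx hip).
exists u, u => //; exists x => //.
by rewrite /x addrC subrK.
Qed.
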